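(* Let $\sigma$ be a rank-one ruled submanifold. Then for every $t\in I$ the degree of the ruling distribution of $\sigma$ at $t$ is at most $1$. In particular, a noncylindrical rank-one submanifold is of degree one.
   Context: Ruled submanifold: given an open interval $I$, a smooth unit-speed curve $\gamma\colon I\to\mathbb{R}^{m+n}$ and smooth vector fields $X_{1},\dotsc,X_{m-1}$ along $\gamma$ that are orthonormal at each $t$, define $\sigma(t,u^{1},\dotsc,u^{m-1})=\gamma(t)+\sum_{j=1}^{m-1}u^{j}X_{j}(t)$ on $I\times\mathbb{R}^{m-1}$. A point is regular if $d\sigma$ is injective there. The ruling distribution is $\mathcal{D}_{t}=\operatorname{Span}(X_{j}(t))_{j=1}^{m-1}$. Define $\rho_{t}\colon\mathcal{D}_{t}\to\mathcal{D}_{t}^{\perp}$ by $\sum_{j}c_{j}X_{j}(t)\mapsto\sum_{j}c_{j}\pi^{\perp}\dot X_{j}(t)$, where $\pi^{\perp}$ is orthogonal projection onto $\mathcal{D}_{t}^{\perp}$. The degree of $\mathcal{D}$ at $t$ is $\operatorname{rank}\rho_{t}$. The submanifold $\sigma$ is noncylindrical if the degree is nonzero for every $t$, and of degree one if it equals $1$ for every $t$. A ruled submanifold is rank-one if at every regular point the kernel of its second fundamental form has dimension $m-1$. *)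

From HB Require Import structures.
From mathcomp Require Import all_boot all_order all_algebra.
From mathcomp Require Import all_classical all_reals all_analysis.
Set Implicit Arguments. Unset Strict Implicit. Unset Printing Implicit Defensive.
Import Order.TTheory GRing.Theory Num.Theory.
Import numFieldNormedType.Exports.
Local Open Scope classical_set_scope.
Local Open Scope ring_scope.

Section RuledDefs.
Variable R : realType.

(* Euclidean inner product on row vectors (the library norm on matrices is the max norm). *)
Definition dotv N (u v : 'rV[R]_N) : R := (u *m v^T) 0 0.

Definition smooth_on N (I : set R) (f : R -> 'rV[R]_N) :=
  forall (j : nat) (t : R), I t -> derivable (derive1n j f) t 1.

Definition unit_speed_on N (I : set R) (g : R -> 'rV[R]_N) :=
  forall t, I t -> dotv (derive1 g t) (derive1 g t) = 1.

Definition orthonormal_on k N (I : set R) (X : 'I_k -> R -> 'rV[R]_N) :=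
  forall t, I t -> forall i j, dotv (X i t) (X j t) = (i == j)%:R.

(* v minus its orthogonal projection onto the row space of A (A with independent rows):
   i.e. the orthogonal projection of v onto the orthogonal complement of rowspace A. *)
Definition perp_proj p N (A : 'M[R]_(p, N)) (v : 'rV[R]_N) : 'rV[R]_N :=
  v - v *m A^T *m invmx (A *m A^T) *m A.

(* Matrix whose rows are X_1(t),...,X_k(t) : basis of the ruling space D_t. *)
Definition ruling_mx k N (X : 'I_k -> R -> 'rV[R]_N) (t : R) : 'M[R]_(k, N) :=
  \matrix_(j < k) X j t.

(* Matrix of rho_t in the basis (X_j(t)) : row j is pi^perp (dX_j/dt)(t). *)
Definition rho_mx k N (X : 'I_k -> R -> 'rV[R]_N) (t : R) : 'M[R]_(k, N) :=
  \matrix_(j < k) perp_proj (ruling_mx X t) (derive1 (X j) t).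

Definition ruling_degree k N (X : 'I_k -> R -> 'rV[R]_N) (t : R) : nat :=
  \rank (rho_mx X t).

(* The ruled map sigma, with coordinates p = (t, u^1, ..., u^k) in R^(k+1),
   p 0 0 = t and p 0 (lift ord0 j) = u^(j+1). *)
Definition ruled_map k N (g : R -> 'rV[R]_N) (X : 'I_k -> R -> 'rV[R]_N)
    (p : 'rV[R]_(k.+1)) : 'rV[R]_N :=
  g (p 0 0) + \sum_(j < k) p 0 (lift ord0 j) *: X j (p 0 0).

Definition coord_vec m (a : 'I_m) : 'rV[R]_m := delta_mx 0 a.

Definition jacobian m N (s : 'rV[R]_m -> 'rV[R]_N) (p : 'rV[R]_m) : 'M[R]_(m, N) :=
  \matrix_(a < m) 'D_(coord_vec a) s p.

Definition regular_point m N (s : 'rV[R]_m -> 'rV[R]_N) (p : 'rV[R]_m) : bool :=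
  row_free (jacobian s p).

(* h_{ab} = normal component of d^2 sigma / dx^a dx^b : the coefficients of the
   second fundamental form in the coordinate basis of the tangent space. *)
Definition sff_coef m N (s : 'rV[R]_m -> 'rV[R]_N) (p : 'rV[R]_m) (a b : 'I_m)
  : 'rV[R]_N :=
  perp_proj (jacobian s p) ('D_(coord_vec b) ('D_(coord_vec a) s) p).

(* Matrix of the linear map c |-> II(sum_a c_a d_a sigma, .) = (sum_a c_a h_{ab})_b,
   its row a being (h_{ab})_b flattened. Its kernel is the kernel of the second
   fundamental form (expressed in the coordinate basis of the tangent space). *)
Definition sff_mx m N (s : 'rV[R]_m -> 'rV[R]_N) (p : 'rV[R]_m) : 'M[R]_(m, m * N) :=
  \matrix_(a < m) mxvec (\matrix_(b < m) sff_coef s p a b).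

Definition sff_kernel_dim m N (s : 'rV[R]_m -> 'rV[R]_N) (p : 'rV[R]_m) : nat :=
  \rank (kermx (sff_mx s p)).

Definition rank_one k N (I : set R) (g : R -> 'rV[R]_N) (X : 'I_k -> R -> 'rV[R]_N) :=
  forall p : 'rV[R]_(k.+1), I (p 0 0) -> regular_point (ruled_map g X) p ->
    sff_kernel_dim (ruled_map g X) p = k.

Definition noncylindrical k N (I : set R) (X : 'I_k -> R -> 'rV[R]_N) :=
  forall t, I t -> ruling_degree X t <> 0%N.

Definition degree_one k N (I : set R) (X : 'I_k -> R -> 'rV[R]_N) :=
  forall t, I t -> ruling_degree X t = 1%N.

End RuledDefs.

From Pilot Require Import Defs.
From HB Require Import structures.
From mathcomp Require Import all_boot all_order all_algebra.
From mathcomp Require Import all_classical all_reals all_analysis.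
From mathcomp Require Import ring zify.
Set Implicit Arguments. Unset Strict Implicit. Unset Printing Implicit Defensive.
Import Order.TTheory GRing.Theory Num.Theory.
Import numFieldNormedType.Exports.
Local Open Scope classical_set_scope.
Local Open Scope ring_scope.

(* Fix t with rho_t <> 0 and pick p = (t, c e_j) whose velocity
   w = gamma'(t) + c X_j'(t) has a nonzero component normal to D_t; then d sigma has
   rows w, X_1, ..., X_k and p is regular. At p, II(d_u_i, d_u_j) = 0 while
   II(d_t, d_u_i) = II(d_u_i, d_t) is the normal part of X_i'(t); were it nonzero,
   the matrix of II would contain a minor [[*, x], [x, 0]] of rank 2, so its kernel
   could not have dimension m - 1. Hence every X_i'(t) lies in span(w, X_1, ..., X_k),
   and rho_t(X_i) = pi^perp X_i'(t) is a multiple of pi^perp w. *)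

Section DirectionalDerivative.
Variable R : realType.

Lemma derive_lineE (V W : normedModType R) (f : V -> W) (p v : V) :
  'D_v f p = 'D_1 (fun h : R => f (h *: v + p)) 0.
Proof.
rewrite /derive.
suff -> : (fun h : R => h^-1 *: ((f \o shift p) (h *: v) - f p)) =
    (fun h : R => h^-1 *: (((fun h : R => f (h *: v + p)) \o shift 0) (h *: 1)
                            - f (0 *: v + p))) by [].
by apply/funext => h; rewrite /= addr0 scale0r add0r [_%:A]mulr1.
Qed.

Lemma derive_translate (W : normedModType R) (f : R -> W) (t : R) :
  'D_1 (fun h : R => f (h + t)) 0 = 'D_1 f t.
Proof.
rewrite /derive.
suff -> : (fun h : R => h^-1 *: (((fun h : R => f (h + t)) \o shift 0) (h *: 1) - f (0 + t))) =
    (fun h : R => h^-1 *: ((f \o shift t) (h *: 1) - f t)) by [].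
by apply/funext => h; rewrite /= addr0 add0r.
Qed.

Lemma derive_affine (W : normedModType R) (phi : R -> W) (c w : W) :
  (forall h, phi h = c + h *: w) -> 'D_1 phi 0 = w.
Proof.
move=> phiE; have -> : phi = cst c + ( *:%R ^~ w) by apply/funext => h; rewrite phiE.
rewrite deriveD; [|exact: derivable_cst|exact/diff_derivable].
by rewrite derive_cst add0r deriveE // diff_val scale1r.
Qed.

End DirectionalDerivative.

Section MatrixRank.
Variable F : fieldType.

Lemma mxrank_mxsub m n m' n' (f : 'I_m' -> 'I_m) (g : 'I_n' -> 'I_n)
    (M : 'M[F]_(m, n)) :
  (\rank (mxsub f g M) <= \rank M)%N.
Proof.
have -> : mxsub f g M = mxsub f id 1%:M *m M *m mxsub id g 1%:M.
  by rewrite mul_rowsub_mx mul1mx mulmx_colsub mulmx1; apply/matrixP => i j; rewrite !mxE.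
exact: leq_trans (mxrankM_maxl _ _) (mxrankM_maxr _ _).
Qed.

(* The minor [[*, x], [x, 0]] has determinant -x^2. *)
Lemma mxrank_ge2_minor m n (M : 'M[F]_(m, n)) r1 r2 c1 c2 (x : F) :
  x != 0 -> M r1 c2 = x -> M r2 c1 = x -> M r2 c2 = 0 -> (2 <= \rank M)%N.
Proof.
move=> x0 M12 M21 M22.
pose rows (i : 'I_2) := if i == 0 then r1 else r2.
pose cols (j : 'I_2) := if j == 0 then c1 else c2.
apply: leq_trans (mxrank_mxsub rows cols M).
set a := M r1 c1.
have -> : mxsub rows cols M = \matrix_(i, j) (if i == 0 then (if j == 0 then a else x)
                                              else (if j == 0 then x else 0)).
  by apply/matrixP => i j; rewrite !mxE /rows /cols; case: (i == 0); case: (j == 0).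
rewrite mxrank_unit // -row_free_unit; apply/row_freeP.
exists (\matrix_(i, j) (if i == 0 then (if j == 0 then 0 else x^-1)
                        else (if j == 0 then x^-1 else - a / x ^+ 2))).
apply/matrixP => i j; rewrite !mxE !big_ord_recl big_ord0 !mxE /=.
by case: i => [[|[|//]] ?]; case: j => [[|[|//]] ?] /=; field.
Qed.

Lemma mxrank_mul_col_mx_le1 m n p q (D : 'M[F]_(m, n)) (w : 'rV[F]_n)
    (A : 'M[F]_(p, n)) (P : 'M[F]_(n, q)) :
  (D <= col_mx w A)%MS -> A *m P = 0 -> (\rank (D *m P) <= 1)%N.
Proof.
move=> /submxP [E ->] AP.
rewrite -mulmxA mul_col_mx AP.
have -> : col_mx (w *m P) (0 : 'M[F]_(p, q)) = col_mx 1%:M 0 *m (w *m P).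
  by rewrite mul_col_mx mul1mx mul0mx.
rewrite mulmxA; exact: leq_trans (mxrankM_maxr _ _) (rank_leq_row _).
Qed.

End MatrixRank.

Lemma dot_self_eq0 (R : realFieldType) n (u : 'rV[R]_n) : (u *m u^T) 0 0 = 0 -> u = 0.
Proof.
rewrite mxE => /eqP; rewrite psumr_eq0 => [/allP u0|i _]; last by rewrite mxE -expr2 sqr_ge0.
apply/rowP => j; have := u0 j (mem_index_enum _).
by rewrite !mxE -expr2 sqrf_eq0 => /eqP.
Qed.

Section OrthogonalProjection.
Variables (R : realType) (p n : nat).

Lemma perp_proj_eq0 (A : 'M[R]_(p, n)) (v : 'rV[R]_n) : perp_proj A v = 0 -> (v <= A)%MS.
Proof. by move/eqP; rewrite subr_eq0 => /eqP ->; exact: submxMl. Qed.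

Definition perp_mx (A : 'M[R]_(p, n)) : 'M[R]_n := 1%:M - A^T *m A.

Variable A : 'M[R]_(p, n).
Hypothesis orthonormal_rows : A *m A^T = 1%:M.

Lemma perp_projE (v : 'rV[R]_n) : perp_proj A v = v *m perp_mx A.
Proof. by rewrite /perp_proj orthonormal_rows invmx1 mulmx1 mulmxBr mulmx1 mulmxA. Qed.

Lemma mul_perp_mx : A *m perp_mx A = 0.
Proof. by rewrite mulmxBr mulmx1 mulmxA orthonormal_rows mul1mx subrr. Qed.

Lemma trmx_perp_mx : (perp_mx A)^T = perp_mx A.
Proof. by rewrite /perp_mx raddfB /= trmx1 trmx_mul trmxK. Qed.

Lemma perp_mx_idem : perp_mx A *m perp_mx A = perp_mx A.
Proof. by rewrite {1}/perp_mx mulmxBl mul1mx -mulmxA mul_perp_mx mulmx0 subr0. Qed.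

(* An explicit left inverse, built from q = w (perp_mx A) and s = q q^T. *)
Lemma row_free_col_mx_perp (w : 'rV[R]_n) :
  w *m perp_mx A != 0 -> row_free (col_mx w A).
Proof.
move=> q0; set q := w *m perp_mx A; set s := (q *m q^T) 0 0.
have s0 : s != 0 by apply: contra q0 => /eqP/dot_self_eq0/eqP.
have qT : q^T = perp_mx A *m w^T by rewrite trmx_mul trmx_perp_mx.
have wq : w *m q^T = s%:M.
  rewrite /s -(mx11_scalar (q *m q^T)) qT /q !mulmxA.
  by rewrite -(mulmxA w (perp_mx A) (perp_mx A)) perp_mx_idem.
have Aq : A *m q^T = 0 by rewrite qT mulmxA mul_perp_mx mul0mx.
apply/row_freeP; exists (row_mx (s^-1 *: q^T) (A^T - s^-1 *: (q^T *m (w *m A^T)))).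
rewrite mul_col_mx !mul_mx_row -!scalemxAr !mulmxBr -!scalemxAr !mulmxA wq Aq.
rewrite orthonormal_rows !mul0mx !scaler0 subr0 mul_scalar_mx -scalemxAl scalerA.
by rewrite mulVf // scale1r subrr scale_scalar_mx mulVf // (scalar_mx_block 1 p).
Qed.

End OrthogonalProjection.

Lemma rank_sff_mx_eq1 (R : realType) m N (s : 'rV[R]_m.+1 -> 'rV[R]_N) p :
  sff_kernel_dim s p = m -> \rank (sff_mx s p) = 1%N.
Proof. by rewrite /sff_kernel_dim mxrank_ker; have := rank_leq_row (sff_mx s p); lia. Qed.

Section RuledMap.
Variables (R : realType) (k N : nat).
Variables (g : R -> 'rV[R]_N) (X : 'I_k -> R -> 'rV[R]_N).
Local Notation sigma := (ruled_map g X).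
Local Notation e := (coord_vec R).

Lemma coord_vecE m (a b : 'I_m) : e a 0 b = (a == b)%:R.
Proof. by rewrite mxE eqxx /= eq_sym. Qed.

Lemma coord_lineE m (a b : 'I_m) (h : R) (p : 'rV[R]_m) :
  (h *: e a + p) 0 b = h * (a == b)%:R + p 0 b.
Proof. by rewrite !mxE eqxx /= eq_sym. Qed.

Lemma sum_coord_lineE (j : 'I_k) (h : R) (q : 'rV[R]_k.+1) (Y : 'I_k -> 'rV[R]_N) :
  \sum_(i < k) (h *: e (lift ord0 j) + q) 0 (lift ord0 i) *: Y i =
    h *: Y j + \sum_(i < k) q 0 (lift ord0 i) *: Y i.
Proof.
under eq_bigr => i _ do rewrite coord_lineE (inj_eq lift_inj) scalerDl.
rewrite big_split /=; congr (_ + _).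
rewrite (bigD1 j) //= eqxx mulr1 big1 ?addr0 // => i /negbTE.
by rewrite eq_sym => ->; rewrite mulr0 scale0r.
Qed.

Lemma ruled_map_partial_u (j : 'I_k) (q : 'rV[R]_k.+1) :
  'D_(e (lift ord0 j)) sigma q = X j (q 0 0).
Proof.
rewrite derive_lineE; apply: (derive_affine (c := sigma q)) => h.
by rewrite /ruled_map coord_lineE mulr0 add0r sum_coord_lineE addrCA [LHS]addrC.
Qed.

Lemma ruled_map_partial_uE (j : 'I_k) :
  'D_(e (lift ord0 j)) sigma = fun q => X j (q 0 0).
Proof. by apply/funext => q; exact: ruled_map_partial_u. Qed.

Lemma ruled_map_partial_t (q : 'rV[R]_k.+1) :
  derivable g (q 0 0) 1 -> (forall i, derivable (X i) (q 0 0) 1) ->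
  'D_(e ord0) sigma q =
    'D_1 g (q 0 0) + \sum_(i < k) q 0 (lift ord0 i) *: 'D_1 (X i) (q 0 0).
Proof.
move=> dg dX.
have dXc i := derivableZ (k := q 0 (lift ord0 i)) (dX i).
pose psi := g + \sum_(i < k) (q 0 (lift ord0 i) \*: X i).
rewrite derive_lineE.
have -> : (fun h : R => sigma (h *: e ord0 + q)) = (fun h => psi (h + q 0 0)).
  apply/funext => h; rewrite /ruled_map /psi coord_lineE eqxx mulr1 fct_sumE /=.
  by congr (_ + _); apply: eq_bigr => i _; rewrite coord_lineE mulr0 add0r.
rewrite derive_translate /psi.
rewrite (deriveD dg (derivable_sum dXc)) (derive_sum dXc); congr (_ + _).
by apply: eq_bigr => i _; exact: deriveZ _ (dX i).
Qed.

Lemma ruled_map_partial_ut (j : 'I_k) (p : 'rV[R]_k.+1) :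
  'D_(e ord0) ('D_(e (lift ord0 j)) sigma) p = 'D_1 (X j) (p 0 0).
Proof.
rewrite ruled_map_partial_uE derive_lineE -(derive_translate (X j)) /=.
suff -> : (fun h => X j ((h *: e ord0 + p) 0 0)) = (fun h => X j (h + p 0 0)) by [].
by apply/funext => h; rewrite coord_lineE eqxx mulr1.
Qed.

Lemma ruled_map_partial_uu (i j : 'I_k) (p : 'rV[R]_k.+1) :
  'D_(e (lift ord0 i)) ('D_(e (lift ord0 j)) sigma) p = 0.
Proof.
rewrite ruled_map_partial_uE derive_lineE; apply: (derive_affine (c := X j (p 0 0))) => h.
by rewrite coord_lineE mulr0 add0r scaler0 addr0.
Qed.

Lemma ruled_map_partial_tu (j : 'I_k) (p : 'rV[R]_k.+1) :
  derivable g (p 0 0) 1 -> (forall i, derivable (X i) (p 0 0) 1) ->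
  'D_(e (lift ord0 j)) ('D_(e ord0) sigma) p = 'D_1 (X j) (p 0 0).
Proof.
move=> dg dX; rewrite derive_lineE.
apply: (derive_affine (c := 'D_(e ord0) sigma p)) => h.
have t_fixed : (h *: e (lift ord0 j) + p) 0 0 = p 0 0 by rewrite coord_lineE mulr0 add0r.
rewrite ruled_map_partial_t t_fixed // ruled_map_partial_t // sum_coord_lineE.
by rewrite addrCA [LHS]addrC.
Qed.

Lemma jacobian_ruled_map (p : 'rV[R]_k.+1) :
  Defs.jacobian sigma p = col_mx ('D_(e ord0) sigma p) (ruling_mx X (p 0 0)).
Proof.
apply/row_matrixP => a; rewrite /Defs.jacobian rowK.
case: (unliftP ord0 a) => [i ->|->].
  rewrite (ruled_map_partial_u i).
  have -> : lift ord0 i = rshift 1 i by apply: val_inj.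
  by rewrite (rowKd i ('D_(e ord0) sigma p)) /ruling_mx rowK.
have -> : ord0 = lshift k (0 : 'I_1) by apply: val_inj.
by rewrite (rowKu 0 ('D_(e ord0) sigma p)); apply/rowP => b; rewrite !mxE.
Qed.

Lemma rank_sff_ruled_map_ge2 (p : 'rV[R]_k.+1) (i : 'I_k) :
  derivable g (p 0 0) 1 -> (forall j, derivable (X j) (p 0 0) 1) ->
  perp_proj (Defs.jacobian sigma p) ('D_1 (X i) (p 0 0)) != 0 ->
  (2 <= \rank (sff_mx sigma p))%N.
Proof.
move=> dg dX; set v := perp_proj _ _ => v0.
have [a va] : exists a, v 0 a != 0.
  apply/existsP; apply: contraR v0 => /existsPn v0.
  by apply/eqP/rowP => a; rewrite [RHS]mxE; apply/eqP/negPn; exact: v0.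
apply: (mxrank_ge2_minor (r1 := ord0) (r2 := lift ord0 i) (c1 := mxvec_index ord0 a)
  (c2 := mxvec_index (lift ord0 i) a) va); rewrite mxE mxvecE mxE /sff_coef.
- by rewrite ruled_map_partial_tu.
- by rewrite ruled_map_partial_ut.
- by rewrite ruled_map_partial_uu /perp_proj !mul0mx subr0 mxE.
Qed.

Lemma ruling_mx_orthonormal (I : set R) (t : R) :
  orthonormal_on I X -> I t -> ruling_mx X t *m (ruling_mx X t)^T = 1%:M.
Proof.
move=> orth It; apply/matrixP => i j; rewrite !mxE -(orth t It i j) /dotv mxE.
by apply: eq_bigr => l _; rewrite !mxE.
Qed.

Lemma rho_mxE (t : R) : ruling_mx X t *m (ruling_mx X t)^T = 1%:M ->
  rho_mx X t = (\matrix_(j < k) 'D_1 (X j) t) *m perp_mx (ruling_mx X t).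
Proof.
move=> orthA; apply/row_matrixP => j.
by rewrite rowK row_mul rowK (perp_projE orthA) derive1E.
Qed.

(* Here c = 0 works unless gamma'(t) is tangent to the ruling, and then c = 1 does. *)
Lemma exists_transversal_point (t : R) :
  derivable g t 1 -> (forall j, derivable (X j) t 1) ->
  (\matrix_(j < k) 'D_1 (X j) t) *m perp_mx (ruling_mx X t) != 0 ->
  exists p : 'rV[R]_k.+1,
    p 0 0 = t /\ 'D_(e ord0) sigma p *m perp_mx (ruling_mx X t) != 0.
Proof.
set P := perp_mx _ => dg dX.
rewrite -submx0 => /row_subPn [j]; rewrite submx0 row_mul rowK => Xj0.
have [c wc] : exists c : R, ('D_1 g t + c *: 'D_1 (X j) t) *m P != 0.
  have [g0|g0] := eqVneq ('D_1 g t *m P) 0; [exists 1|exists 0].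
    by rewrite scale1r mulmxDl g0 add0r.
  by rewrite scale0r addr0.
pose p := t *: e ord0 + c *: e (lift ord0 j).
have pE b : p 0 b = t * (ord0 == b)%:R + c * (lift ord0 j == b)%:R.
  by rewrite coord_lineE [X in _ + X]mxE coord_vecE.
have pt : p 0 0 = t by rewrite pE eqxx mulr1 mulr0 addr0.
have dgp : derivable g (p 0 0) 1 by rewrite pt.
have dXp : forall i, derivable (X i) (p 0 0) 1 by rewrite pt.
exists p; split; first exact: pt.
rewrite (ruled_map_partial_t dgp dXp) pt.
rewrite (bigD1 j) //= big1 => [|i ji]; last first.
  by rewrite pE (inj_eq lift_inj) [j == i]eq_sym (negbTE ji) !mulr0 add0r scale0r.
by rewrite pE eqxx mulr1 mulr0 add0r addr0.
Qed.

Lemma ruling_derivatives_tangent (p : 'rV[R]_k.+1) :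
  derivable g (p 0 0) 1 -> (forall j, derivable (X j) (p 0 0) 1) ->
  sff_kernel_dim sigma p = k ->
  (\matrix_(j < k) 'D_1 (X j) (p 0 0) <= Defs.jacobian sigma p)%MS.
Proof.
move=> dg dX /rank_sff_mx_eq1 rank1; apply/row_subP => i; rewrite rowK.
apply: perp_proj_eq0; apply/eqP; apply: contraTT isT => v0.
by have := rank_sff_ruled_map_ge2 dg dX v0; rewrite rank1.
Qed.

Lemma ruling_degree_le1 (I : set R) (t : R) :
  I t -> derivable g t 1 -> (forall j, derivable (X j) t 1) ->
  orthonormal_on I X -> rank_one I g X -> (ruling_degree X t <= 1)%N.
Proof.
move=> It dg dX orth rank1.
have orthA := ruling_mx_orthonormal orth It.
rewrite /ruling_degree rho_mxE //.
have [->|rho0] := eqVneq ((\matrix_(j < k) 'D_1 (X j) t) *m perp_mx (ruling_mx X t)) 0.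
  by rewrite mxrank0.
have [p [pt wP]] := exists_transversal_point dg dX rho0.
have reg : regular_point sigma p.
  by rewrite /regular_point jacobian_ruled_map pt; exact: row_free_col_mx_perp.
rewrite -pt in dg dX It *.
have := ruling_derivatives_tangent dg dX (rank1 p It reg).
rewrite jacobian_ruled_map => /mxrank_mul_col_mx_le1; apply.
by rewrite pt; exact: mul_perp_mx.
Qed.

End RuledMap.

Theorem mainTheorem6 (R : realType) (k n : nat) (I : set R)
    (gamma : R -> 'rV[R]_(k.+1 + n)) (X : 'I_k -> R -> 'rV[R]_(k.+1 + n)) :
  open I -> is_interval I ->
  smooth_on I gamma -> (forall j, smooth_on I (X j)) ->
  unit_speed_on I gamma -> orthonormal_on I X ->
  rank_one I gamma X ->
  (forall t, I t -> (ruling_degree X t <= 1)%N) /\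
  (noncylindrical I X -> degree_one I X).
Proof.
move=> _ _ smooth_gamma smooth_X _ orth rank1.
have deg_le1 t : I t -> (ruling_degree X t <= 1)%N.
  move=> It; have dgamma : derivable gamma t 1 := smooth_gamma 0%N t It.
  have dX j : derivable (X j) t 1 := smooth_X j 0%N t It.
  exact: ruling_degree_le1 It dgamma dX orth rank1.
split=> // noncyl t It.
by have := deg_le1 t It; have := noncyl t It; lia.
Qed.
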